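(* Let $Y\in\mathbb R^{m\times n}$, $0<c<1$ and $t>0$, and put $R_c:=\frac{1}{m+n}\log(1/c)$. (a) If $\delta(\exp(a)x_Y)<c^{\frac1{m+n}}$ for some $a\in C_{R_c}(t)$, then there is $a'\in C_0(t)$ with $\delta(\exp(a')x_Y)<c^{\frac{1}{m(m+n)}}$. (b) If $\delta(\exp(a)x_Y)<c^{\frac{m+n-1}{m(m+n)}}$ for some $a\in C_0(t)$, then there is $a'\in C_{R_c}\big(t-\frac{n-1}{m+n}\log c\big)$ with $\delta(\exp(a')x_Y)<c^{\frac1{m+n}}$.
   Context: $m,n\ge1$; $\mathfrak a=\{\operatorname{diag}(a_1,\dots,a_{m+n}):\sum a_i=0\}$, $G=\operatorname{SL}_{m+n}(\mathbb R)$ acting on unimodular lattices in $\mathbb R^{m+n}$. For a constant $R\in\mathbb R$ and $t\ge0$: $C_R(t):=\{a\in\mathfrak a:a_1+\dots+a_m=-(a_{m+1}+\dots+a_{m+n})=t,\ a_i>-R\ (1\le i\le m),\ a_{m+j}<-R\ (1\le j\le n)\}$; $C_0(t)$ is the case $R=0$. For a lattice $x$, $\delta(x):=\min\{\|\boldsymbol v\|_\infty:\boldsymbol v\in x\setminus\{0\}\}$. $x_Y:=\begin{pmatrix}I_m&Y\\0&I_n\end{pmatrix}\mathbb Z^{m+n}$. *)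

From HB Require Import structures.
From mathcomp Require Import all_boot all_order all_algebra.
From mathcomp Require Import all_classical all_reals all_analysis.
Set Implicit Arguments. Unset Strict Implicit. Unset Printing Implicit Defensive.
Import Order.TTheory GRing.Theory Num.Theory.
Local Open Scope ring_scope.
Local Open Scope classical_set_scope.

Section Defs.
Variable R : realType.

(* matrix of x_Y = [[I_m, Y],[0, I_n]] ; x_Y = xYmat Y *m Z^{m+n} *)
Definition xYmat (m n : nat) (Y : 'M[R]_(m, n)) : 'M[R]_(m + n) :=
  block_mx 1%:M Y 0 1%:M.

Definition expdiag (k : nat) (a : 'rV[R]_k) : 'M[R]_k := diag_mx (map_mx expR a).

Definition supnorm (k : nat) (w : 'cV[R]_k) : R := \big[Num.max/0]_(i < k) `|w i 0|.

Definition delta (k : nat) (g : 'M[R]_k) : R :=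
  inf [set supnorm (g *m map_mx intr v) | v in [set v : 'cV[int]_k | v != 0]].

Definition Ccone (m n : nat) (Rr t : R) (a : 'rV[R]_(m + n)) : Prop :=
  [/\ \sum_(i < m) a 0 (lshift n i) = t,
      \sum_(j < n) a 0 (rshift m j) = - t,
      (forall i : 'I_m, - Rr < a 0 (lshift n i)) &
      (forall j : 'I_n, a 0 (rshift m j) < - Rr)].

End Defs.

From HB Require Import structures.
From mathcomp Require Import all_boot all_order all_algebra.
From mathcomp Require Import all_classical all_reals all_analysis.
From mathcomp Require Import ring lra.
Set Implicit Arguments. Unset Strict Implicit. Unset Printing Implicit Defensive.
Import Order.TTheory GRing.Theory Num.Theory.
Local Open Scope ring_scope.

(* For a lattice vector v put z = x_Y v; its weighted sizes in exp(a) x_Y are exp(a_k) |z_k|.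
   (a) For a in C_{R_c}(t) all weighted sizes are below s < e^{-R_c}.  Raise every
   nonpositive upper weight a_i to a small eta > 0 and shrink the positive ones to keep
   the sum t.  Dirichlet's simultaneous approximation theorem, applied to the z_i with
   a_i <= 0 at precision e^{-R_c/m - eta}, gives an integer k < e^{-R_c/m} / s and a
   lattice vector k v - w all of whose new weighted sizes are below e^{-R_c/m}; the
   choice of eta makes the Dirichlet budget positive.
   (b) For a in C_0(t) the upper weights are positive, so v has a nonzero lower integer
   coordinate j0, which forces a_{m+j0} < -R_c.  Lowering the other lower weights by
   R_c and raising the upper ones by (n-1) R_c / m lands in C_{R_c}, at the cost of a
   factor e^{(n-1) R_c / m} on the weighted sizes. *)

Section Dirichlet.
Variable R : realType.

Definition grid_window {M : nat} (x b : R) (g : 'I_M) : bool :=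
  `[< exists j : int, 0 < (nat_of_ord g)%:R / M%:R - x + j%:~R <= b >].

Lemma card_grid_window (M : nat) (x b : R) : (0 < M)%N -> 0 < b <= 1 ->
  (Num.truncn (M%:R * b) <= #|[pred g : 'I_M | grid_window x b g]|)%N.
Proof.
move=> M0 /andP[b0 b1].
have hM : (0 : R) < M%:R by rewrite ltr0n.
set L := Num.truncn (M%:R * b).
have hL : (L%:R : R) <= M%:R * b by rewrite truncn_le mulr_ge0 // ltW.
have LM : (L <= M)%N.
  by rewrite -(ler_nat R); apply: (le_trans hL); rewrite ler_piMr // ltW.
set s := (Num.truncn `|x|).+1.
have hs : `|x| < s%:R := truncnS_gt _.
set y := x + s%:R.
have y0 : 0 <= y by rewrite /y; have := ler_norm (- x); rewrite normrN; lra.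
set c0 := (Num.truncn (M%:R * y)).+1.
have hc0 : (c0%:R - 1 <= M%:R * y < c0%:R)%R.
  by rewrite truncnS_gt /c0 -natr1 addrK truncn_le mulr_ge0 // ltW.
(* the grid points c0, ..., c0 + L - 1 (mod M) lie in M * (y, y + b], and y = x mod 1 *)
pose f (l : 'I_L) : 'I_M := Ordinal (ltn_pmod (c0 + l) M0).
have finj : injective f.
  move=> l1 l2 /(congr1 val) /= /eqP; rewrite eqn_modDl.
  rewrite !modn_small; first by move=> /eqP h; apply: val_inj.
    exact: leq_trans (ltn_ord l2) LM.
  exact: leq_trans (ltn_ord l1) LM.
rewrite -{1}(card_ord L) -(card_imset 'I_L finj).
apply: subset_leq_card; apply/fintype.subsetP => g /imsetP [l _ ->].
rewrite inE /= /grid_window; apply/asboolP; apply/asboolP.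
exists (((c0 + l) %/ M)%:Z - s%:Z).
have -> : (((c0 + l) %% M)%N%:R : R) =
          (c0 + l)%N%:R - ((c0 + l) %/ M)%N%:R * M%:R.
  by rewrite {2}(divn_eq (c0 + l) M) natrD natrM; ring.
rewrite intrB -!pmulrn.
set Q := (((c0 + l) %/ M)%N%:R : R).
have -> : ((c0 + l)%N%:R - Q * M%:R) / M%:R - x + (Q - s%:R) =
          ((c0 + l)%N%:R - M%:R * y) / M%:R.
  by rewrite /y; field; rewrite gt_eqF.
have hl : (l%:R + 1 : R) <= L%:R by rewrite natr1 ler_nat ltn_ord.
have l0 : (0 : R) <= l%:R by [].
rewrite natrD; apply/andP; split; first by apply: divr_gt0 => //; lra.
by rewrite ler_pdivrMr //; lra.
Qed.

Lemma prod_subr_bounds (I : Type) (r : seq I) (b : I -> R) (d : R) :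
  0 <= d -> (forall i, d <= b i <= 1) ->
  [/\ 0 <= \prod_(i <- r) b i <= 1, 0 <= \prod_(i <- r) (b i - d) &
   \prod_(i <- r) b i - (size r)%:R * d <= \prod_(i <- r) (b i - d)].
Proof.
move=> d0 hb; elim: r => [|x r [/andP[p0 p1] q0 IH]].
  by rewrite !big_nil /= mul0r subr0 ler01 lexx.
rewrite !big_cons /=.
have /andP[bx0 bx1] := hb x.
set Pb := \prod_(i <- r) b i in p0 p1 IH *.
set Pd := \prod_(i <- r) (b i - d) in q0 IH *.
have bxd : 0 <= b x - d by lra.
split; first by rewrite mulr_ge0 ?mulr_ile1 //; lra.
  by rewrite mulr_ge0.
have h1 : (b x - d) * (Pb - (size r)%:R * d) <= (b x - d) * Pd by rewrite ler_wpM2l.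
have h2 : (b x - d) * ((size r)%:R * d) <= (size r)%:R * d.
  by rewrite ler_piMl ?mulr_ge0 //; lra.
have h3 : d * Pb <= d by rewrite ler_piMr.
rewrite -natr1; apply: le_trans h1.
have -> : (b x - d) * (Pb - (size r)%:R * d) =
  b x * Pb - d * Pb - (b x - d) * ((size r)%:R * d) by ring.
lra.
Qed.

Lemma pigeonhole_sum_card (G I : finType) (H : I -> pred G) :
  (#|G| < \sum_k #|H k|)%N -> exists s k1 k2, [/\ k1 != k2, s \in H k1 & s \in H k2].
Proof.
move=> hlt; apply: contrapT => hno; move: hlt; apply/negP; rewrite -leqNgt.
have -> : (\sum_k #|H k| = \sum_s #|[pred k | s \in H k]|)%N.
  rewrite (eq_bigr (fun k => \sum_s (if s \in H k then 1 else 0))%N); last first.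
    by move=> k _; rewrite -sum1_card big_mkcond.
  rewrite exchange_big; apply: eq_bigr => s _.
  by rewrite -sum1_card [RHS]big_mkcond /=; apply: eq_bigr => k _; rewrite inE.
rewrite -sum1_card; apply: leq_sum => s _.
apply/card_le1_eqP => k1 k2; rewrite !inE => h1 h2.
apply/eqP; apply: contraT => hne; case: hno; exists s, k1, k2.
by rewrite eq_sym.
Qed.

Lemma exists_nat_mul_gt1 (K P : R) : 0 < P -> 1 < K * P ->
  exists N : nat, (N.-1)%:R < K /\ 1 < N%:R * P.
Proof.
move=> P0 hK.
have hKP : P^-1 < K by rewrite -div1r ltr_pdivrMr.
set K' := (K + P^-1) / 2.
have K'P : 1 < K' * P.
  have -> : K' * P = (K * P + 1) / 2 by rewrite /K'; field; rewrite gt_eqF.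
  lra.
have K'0 : 0 <= K'.
  have : 0 < P^-1 by rewrite invr_gt0.
  rewrite /K'; lra.
have hN1 : (Num.truncn K')%:R <= K' by rewrite truncn_le.
exists (Num.truncn K').+1; split; first by rewrite /K' in hN1 *; lra.
by apply: lt_le_trans K'P _; rewrite ler_pM2r // ltW // truncnS_gt.
Qed.

Lemma prodr_le_factor (T : finType) (bt : T -> R) :
  (forall i, 0 < bt i <= 1) -> forall j, \prod_i bt i <= bt j.
Proof.
move=> hb j; rewrite (bigD1 j) //=; have /andP[b0 _] := hb j.
apply: ler_piMr; first exact: ltW.
apply: Num.Theory.prodr_ile1 => i _.
by have /andP[c0 c1] := hb i; rewrite c1 ltW.
Qed.

Lemma grid_count (T : finType) (bt : T -> R) (N : nat) :
  (forall i, 0 < bt i <= 1) -> 1 < N%:R * \prod_i bt i ->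
  exists2 M : nat, (0 < M)%N &
    (M ^ #|T| < N * \prod_i Num.truncn (M%:R * bt i))%N.
Proof.
move=> hb hN.
set P := \prod_i bt i in hN *.
have N0 : (0 : R) < N%:R.
  by rewrite ltr0n lt0n; apply: contraTneq hN => ->; rewrite mul0r ltr10.
have Pb i : P <= bt i := prodr_le_factor hb i.
set eps := P - N%:R^-1.
have eps0 : 0 < eps by rewrite /eps subr_gt0 -div1r ltr_pdivrMr // mulrC.
set M := (Num.truncn ((#|T|%:R + 1) / eps)).+1.
have hMe : #|T|%:R + 1 < M%:R * eps by rewrite -ltr_pdivrMr // truncnS_gt.
have hMR : (0 : R) < M%:R by rewrite ltr0n.
have hT0 : (0 : R) <= #|T|%:R by [].
have epsP : eps <= P by rewrite /eps lerBlDr lerDl invr_ge0 ltW.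
have Mb i : 1 <= M%:R * bt i.
  have : M%:R * eps <= M%:R * bt i by rewrite ler_pM2l // (le_trans epsP).
  lra.
have Minv0 : 0 <= (M%:R : R)^-1 by rewrite invr_ge0 ltW.
have hb' i : M%:R^-1 <= bt i <= 1.
  have /andP[_ ->] := hb i; rewrite andbT.
  by rewrite -[M%:R^-1]mul1r ler_pdivrMr // mulrC.
(* M bt_i - 1 <= floor (M bt_i), and prod (bt_i - 1/M) >= P - |T|/M > 1/N *)
exists M => //; rewrite -(ltr_nat R) natrM natrX natr_prod.
have hfloor : \prod_i (M%:R * bt i - 1) <= \prod_i (Num.truncn (M%:R * bt i))%:R.
  apply: ler_prod => i _; have := Mb i.
  have := truncnS_gt (M%:R * bt i); rewrite -natr1; lra.
have hfactor : \prod_i (M%:R * bt i - 1) = M%:R ^+ #|T| * \prod_i (bt i - M%:R^-1).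
  rewrite -prodr_const -big_split /=; apply: eq_bigr => i _.
  by field; rewrite gt_eqF.
have [_ _ hsub] := prod_subr_bounds (enum T) Minv0 hb'.
rewrite -cardT enumT in hsub.
have hTM : #|T|%:R * M%:R^-1 < eps.
  by rewrite -[X in X < _]/(#|T|%:R / M%:R) ltr_pdivrMr // mulrC; lra.
have hNP : 1 < N%:R * (P - #|T|%:R * M%:R^-1).
  by rewrite -ltr_pdivrMl // mulr1; rewrite /eps in hTM; lra.
have hMT : (0 : R) < M%:R ^+ #|T| by rewrite exprn_gt0.
apply: lt_le_trans (_ : N%:R * (M%:R ^+ #|T| * \prod_i (bt i - M%:R^-1)) <= _).
  rewrite mulrCA -[X in X < _]mulr1 ltr_pM2l //.
  by apply: lt_le_trans hNP _; rewrite ler_pM2l.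
by rewrite -hfactor ler_pM2l.
Qed.

Theorem dirichlet_approx (T : finType) (th bt : T -> R) (K : R) :
  (forall i, 0 < bt i <= 1) -> 1 < K * \prod_i bt i ->
  exists k : nat, [/\ (0 < k)%N, k%:R < K &
    forall i, exists z : int, `|k%:R * th i - z%:~R| < bt i].
Proof.
move=> hb hK.
have P0 : 0 < \prod_i bt i by apply: prodr_gt0 => i _; case/andP: (hb i).
have [N [NK NP]] := exists_nat_mul_gt1 P0 hK.
have [M M0 hM] := grid_count hb NP.
pose H (k : 'I_N) : pred {ffun T -> 'I_M} :=
  [pred s | s \in family (fun i => [pred g | grid_window (k%:R * th i) (bt i) g])].
have hsum : (#|{ffun T -> 'I_M}| < \sum_k #|H k|)%N.
  rewrite card_ffun card_ord; apply: leq_trans hM _.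
  rewrite -[in X in (X * _)%N](card_ord N) -sum_nat_const.
  apply: leq_sum => k _; rewrite /H card_family foldrE big_map.
  rewrite (_ : \prod_i _ = \prod_(i <- enum T) Num.truncn (M%:R * bt i)); last first.
    by rewrite big_enum; apply: eq_bigl => i; rewrite inE.
  by apply: leq_prod => i _; exact: card_grid_window.
(* two shifts k1 < k2 put the grid point s i in the windows of both k1 th i and k2 th i *)
have [s [k1 [k2 [hne hs1 hs2]]]] := pigeonhole_sum_card hsum.
wlog lt12 : k1 k2 hne hs1 hs2 / (k1 < k2)%N.
  move=> W; case: (ltngtP k1 k2) => [|lt21|eq12]; first exact: W.
    by apply: (W k2 k1) => //; rewrite eq_sym.
  by move: hne; rewrite (val_inj eq12) eqxx.
exists (k2 - k1)%N; split; first by rewrite subn_gt0.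
  apply: le_lt_trans NK; rewrite ler_nat -ltnS (ltn_predK (ltn_ord k2)).
  exact: leq_ltn_trans (leq_subr k1 k2) (ltn_ord k2).
move=> i; move: hs1 hs2; rewrite !inE => /familyP/(_ i) h1 /familyP/(_ i) h2.
move: h1 h2 => /asboolP [j1 hj1] /asboolP [j2 hj2].
exists (j2 - j1); rewrite natrB ?(ltnW lt12) // intrB ltr_norml mulrBl.
by move: hj1 hj2; lra.
Qed.

End Dirichlet.

Section Lattice.
Variables (R : realType) (m n : nat) (Y : 'M[R]_(m, n)).

Definition latvec (v : 'cV[int]_(m + n)) : 'cV[R]_(m + n) := xYmat Y *m map_mx intr v.

Lemma latvecE v : latvec v =
  col_mx (usubmx (map_mx intr v) + Y *m dsubmx (map_mx intr v)) (dsubmx (map_mx intr v)).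
Proof.
by rewrite /latvec /xYmat -{1}(vsubmxK (map_mx intr v)) mul_block_col !mul1mx mul0mx add0r.
Qed.

Lemma latvec_lshift v i : latvec v (lshift n i) 0 =
  (v (lshift n i) 0)%:~R + \sum_j Y i j * (v (rshift m j) 0)%:~R.
Proof.
by rewrite latvecE col_mxEu !mxE; congr (_ + _); apply: eq_bigr => j _; rewrite !mxE.
Qed.

Lemma latvec_rshift v j : latvec v (rshift m j) 0 = (v (rshift m j) 0)%:~R.
Proof. by rewrite latvecE col_mxEd !mxE. Qed.

Definition short (a : 'rV[R]_(m + n)) (B : R) (v : 'cV[int]_(m + n)) :=
  forall k, expR (a 0 k) * `|latvec v k 0| < B.

Lemma norm_expdiag_latvec (a : 'rV[R]_(m + n)) v k :
  `|(expdiag a *m xYmat Y *m map_mx intr v) k 0| = expR (a 0 k) * `|latvec v k 0|.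
Proof.
by rewrite -mulmxA /expdiag mul_diag_mx !mxE normrM gtr0_norm ?expR_gt0.
Qed.

Lemma delta_ltP (a : 'rV[R]_(m + n)) (B : R) : (0 < m + n)%N -> 0 < B ->
  delta (expdiag a *m xYmat Y) < B <-> exists2 v, v != 0 & short a B v.
Proof.
move=> mn0 B0; rewrite /delta; set S := (X in inf X); split.
- have S0 : (S !=set0)%classic.
    exists (supnorm (expdiag a *m xYmat Y *m map_mx intr (const_mx 1))).
    exists (const_mx 1) => //=; apply/eqP => /matrixP /(_ (Ordinal mn0) 0).
    by rewrite !mxE => /eqP; rewrite oner_eq0.
  move=> /(inf_lt S0) [_ [v v0 <-] hv]; exists v => // k.
  rewrite -norm_expdiag_latvec; apply: le_lt_trans hv.
  exact: (le_bigmax _ (fun i => `|(expdiag a *m xYmat Y *m map_mx intr v) i 0|) k).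
- move=> [v v0 hv]; have lbS : has_lbound S.
    by exists 0 => _ [w _ <-]; apply: (big_ind (fun x => 0 <= x)) => // x y;
      rewrite le_max => ->.
  have Sv : S (supnorm (expdiag a *m xYmat Y *m map_mx intr v)) by exists v.
  apply: (le_lt_trans (ge_inf lbS Sv)).
  by apply: bigmax_lt => // k _; rewrite norm_expdiag_latvec.
Qed.

Lemma short_shift (a a' : 'rV[R]_(m + n)) B d v : short a B v ->
  (forall k, a' 0 k <= a 0 k + d) -> short a' (B * expR d) v.
Proof.
move=> hv ha k; apply: (@le_lt_trans _ _ (expR (a 0 k + d) * `|latvec v k 0|)).
  by rewrite ler_wpM2r // ler_expR.
by rewrite expRD mulrAC ltr_pM2r ?expR_gt0.
Qed.

Lemma short_lower_coord (a : 'rV[R]_(m + n)) B v :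
  (forall i, B <= expR (a 0 (lshift n i))) -> v != 0 -> short a B v ->
  exists j0, v (rshift m j0) 0 != 0 /\ expR (a 0 (rshift m j0)) < B.
Proof.
move=> hB v0 hv.
have int_norm_ge1 (x : int) : x != 0 -> (1 : R) <= `|x%:~R|.
  by move=> x0; apply: norm_intr_ge1; rewrite ?intr_int // intr_eq0.
suff [j0 hj0] : exists j0, v (rshift m j0) 0 != 0.
  exists j0; split => //; apply: le_lt_trans (hv (rshift m j0)).
  by rewrite latvec_rshift ler_peMr ?expR_ge0 ?int_norm_ge1.
apply: contrapT => hno.
have vR j : v (rshift m j) 0 = 0.
  by apply/eqP; apply: contraT => h; case: hno; exists j.
(* otherwise some upper coordinate is a nonzero integer, of weighted size >= B *)
have [k vk0] : exists k, v k 0 != 0.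
  apply: contrapT => hk; case/negP: v0; apply/eqP/matrixP => k j.
  by rewrite ord1 mxE; apply/eqP; apply: contraT => h; case: hk; exists k.
move: vk0; rewrite -(fintype.splitK k); case: (fintype.split k) => [i|j] /= vi0;
  last by rewrite vR eqxx in vi0.
have := hv (lshift n i); rewrite latvec_lshift big1 ?addr0; last first.
  by move=> j _; rewrite vR mulr0.
apply/negP; rewrite -leNgt; apply: le_trans (hB i) _.
by rewrite ler_peMr ?expR_ge0 ?int_norm_ge1.
Qed.

Lemma short_max_weight (a : 'rV[R]_(m + n)) B v j0 :
  short a B v -> v (rshift m j0) 0 != 0 ->
  exists s0, [/\ 0 < s0, s0 < B & forall q, expR (a 0 q) * `|latvec v q 0| <= s0].
Proof.
move=> hv vj0; set s0 := \big[Num.max/0]_q (expR (a 0 q) * `|latvec v q 0|).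
have hs0 q : expR (a 0 q) * `|latvec v q 0| <= s0.
  exact: (le_bigmax _ (fun q => expR (a 0 q) * `|latvec v q 0|) q).
exists s0; split => //.
  apply: lt_le_trans (hs0 (rshift m j0)).
  by rewrite mulr_gt0 ?expR_gt0 // normr_gt0 latvec_rshift intr_eq0.
apply: bigmax_lt => [|q _]; last exact: hv.
by apply: le_lt_trans (hv (rshift m j0)); rewrite mulr_ge0 ?expR_ge0.
Qed.

End Lattice.

Lemma short_dirichlet (R : realType) (m n : nat) (Y : 'M[R]_(m, n))
    (a a' : 'rV[R]_(m + n)) (v : 'cV[int]_(m + n)) (j0 : 'I_n)
    (P : pred 'I_m) (s0 e eta : R) :
  0 < s0 -> 0 < e -> (forall q, expR (a 0 q) * `|latvec Y v q 0| <= s0) ->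
  v (rshift m j0) 0 != 0 ->
  (forall i, P i -> a' 0 (lshift n i) = eta) ->
  (forall i, ~~ P i -> a' 0 (lshift n i) <= a 0 (lshift n i)) ->
  (forall j, a' 0 (rshift m j) <= a 0 (rshift m j)) ->
  e * expR (- eta) <= 1 -> 1 < e / s0 * (e * expR (- eta)) ^+ #|P| ->
  exists2 u, u != 0 & short Y a' e u.
Proof.
move=> s00 e0 hs0 vj0 aP anP aR gam1 hK.
set gam := e * expR (- eta) in gam1 hK.
pose bt i := if P i then gam else 1.
have hbt i : 0 < bt i <= 1.
  by rewrite /bt; case: ifP => _; rewrite ?ltr01 ?lexx // gam1 mulr_gt0 ?expR_gt0.
have hprod : \prod_i bt i = gam ^+ #|P| by rewrite -big_mkcond prodr_const.
rewrite -hprod in hK.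
have [k [k0 kK hk]] := dirichlet_approx (fun i => latvec Y v (lshift n i) 0) hbt hK.
have [nf hnf] := fin_all_exists hk.
pose u : 'cV[int]_(m + n) := k%:Z *: v - col_mx (\col_i (if P i then nf i else 0)) 0.
have uR j : u (rshift m j) 0 = k%:Z * v (rshift m j) 0.
  by rewrite !mxE (unsplitK (inr j : 'I_m + 'I_n)) !mxE subr0.
have zuL i : latvec Y u (lshift n i) 0 =
    k%:R * latvec Y v (lshift n i) 0 - (if P i then nf i else 0)%:~R.
  rewrite !latvec_lshift !mxE (unsplitK (inl i : 'I_m + 'I_n)) !mxE.
  rewrite (eq_bigr (fun j => k%:R * (Y i j * (v (rshift m j) 0)%:~R))); last first.
    by move=> j _; rewrite uR intrM -pmulrn mulrCA.
  by rewrite -mulr_sumr intrB intrM -pmulrn; ring.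
have zuR j : latvec Y u (rshift m j) 0 = k%:R * latvec Y v (rshift m j) 0.
  by rewrite !latvec_rshift uR intrM -pmulrn.
have scaled q : a' 0 q <= a 0 q -> latvec Y u q 0 = k%:R * latvec Y v q 0 ->
    expR (a' 0 q) * `|latvec Y u q 0| < e.
  move=> haq ->; rewrite normrM normr_nat mulrCA.
  apply: (@le_lt_trans _ _ (k%:R * s0)); last by rewrite -ltr_pdivlMr.
  rewrite ler_wpM2l //; apply: le_trans (hs0 q).
  by rewrite ler_wpM2r // ler_expR.
exists u.
  apply/eqP => /matrixP /(_ (rshift m j0) 0); rewrite uR mxE => /eqP.
  by rewrite mulf_eq0 (negbTE vj0) orbF => /eqP [] k00; rewrite k00 in k0.
move=> q; rewrite -(fintype.splitK q); case: (fintype.split q) => [i|j] /=; last first.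
  exact: scaled (aR j) (zuR j).
case hPi: (P i); last first.
  by apply: scaled; [apply: anP; rewrite hPi | rewrite zuL hPi subr0].
have := hnf i; rewrite /bt hPi zuL hPi aP // => hi.
rewrite (_ : e = expR eta * gam); last by rewrite /gam mulrCA -expRD subrr expR0 mulr1.
by rewrite ltr_pM2l ?expR_gt0.
Qed.

Section Cones.
Variables (R : realType) (m n : nat).
Implicit Types (a : 'rV[R]_(m + n)) (Rr t eta L : R).

Definition nonpos_upper a : pred 'I_m := [pred i | a 0 (lshift n i) <= 0].

Definition raise_scale a eta : R :=
  (\sum_i a 0 (lshift n i) - #|nonpos_upper a|%:R * eta) /
  \sum_(i | ~~ nonpos_upper a i) a 0 (lshift n i).

(* [raise_scale] is chosen so that the upper coordinates keep their sum. *)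
Definition raise a eta : 'rV[R]_(m + n) :=
  row_mx (\row_i if nonpos_upper a i then eta else raise_scale a eta * a 0 (lshift n i))
         (rsubmx a).

Definition shift_cone a L Rr (j0 : 'I_n) : 'rV[R]_(m + n) :=
  row_mx (\row_i (a 0 (lshift n i) + L))
         (\row_j (a 0 (rshift m j) - Rr + (if j == j0 then Rr else 0))).

Lemma card_nonpos_upper_lt a :
  0 < \sum_i a 0 (lshift n i) -> (#|nonpos_upper a| < m)%N.
Proof.
move=> hs; have [i hi] : exists i, ~~ nonpos_upper a i.
  apply: contrapT => hno; suff : \sum_i a 0 (lshift n i) <= 0 by lra.
  by apply: sumr_le0 => i _; apply: contraT => hi; case: hno; exists i.
have := cardC (nonpos_upper a); rewrite card_ord => /eq_leq; apply: leq_trans.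
by rewrite -[X in (X < _)%N]addn0 ltn_add2l; apply/card_gt0P; exists i; rewrite inE.
Qed.

Lemma sum_upper_le_pos a :
  \sum_i a 0 (lshift n i) <= \sum_(i | ~~ nonpos_upper a i) a 0 (lshift n i).
Proof.
rewrite (bigID (nonpos_upper a)) /= gerDr; exact: sumr_le0.
Qed.

Lemma raise_upper a eta i : 0 <= eta ->
  #|nonpos_upper a|%:R * eta < \sum_i a 0 (lshift n i) ->
  if nonpos_upper a i then raise a eta 0 (lshift n i) = eta
  else 0 < raise a eta 0 (lshift n i) <= a 0 (lshift n i).
Proof.
move=> eta0 hlt; rewrite /raise row_mxEl mxE; case: ifP => hi; rewrite hi //.
have ai0 : 0 < a 0 (lshift n i) by rewrite ltNge; exact: negbT hi.
have hb0 : 0 <= #|nonpos_upper a|%:R * eta by rewrite mulr_ge0.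
have hSG := sum_upper_le_pos a.
have SG0 : 0 < \sum_(i | ~~ nonpos_upper a i) a 0 (lshift n i) by lra.
have sc0 : 0 < raise_scale a eta by rewrite divr_gt0 // subr_gt0.
have sc1 : raise_scale a eta <= 1 by rewrite ler_pdivrMr // mul1r; lra.
by rewrite mulr_gt0 // ler_piMl // ltW.
Qed.

Lemma raise_lower a eta j : raise a eta 0 (rshift m j) = a 0 (rshift m j).
Proof. by rewrite /raise row_mxEr mxE. Qed.

Lemma Ccone_raise Rr t eta a : 0 <= Rr -> 0 < eta ->
  #|nonpos_upper a|%:R * eta < t -> Ccone Rr t a -> Ccone 0 t (raise a eta).
Proof.
move=> Rr0 eta0 hlt [sa sq ha hq]; rewrite -sa in hlt.
have hup i := raise_upper i (ltW eta0) hlt.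
split.
- rewrite (bigID (nonpos_upper a)) /=.
  rewrite (eq_bigr (fun => eta)); last by move=> i hi; have := hup i; rewrite hi.
  rewrite [X in _ + X](eq_bigr (fun i => raise_scale a eta * a 0 (lshift n i))); last first.
    by move=> i hi; rewrite /raise row_mxEl mxE (negbTE hi).
  have SG0 : 0 < \sum_(i | ~~ nonpos_upper a i) a 0 (lshift n i).
    have := sum_upper_le_pos a; have : 0 <= #|nonpos_upper a|%:R * eta.
      by rewrite mulr_ge0 // ltW.
    lra.
  rewrite sumr_const -mulr_sumr /raise_scale -sa mulr_natl.
  by field; rewrite gt_eqF.
- by rewrite (eq_bigr (fun j => a 0 (rshift m j))) // => j _; rewrite raise_lower.
- move=> i; rewrite oppr0; have := hup i; case: ifP => _; first by move->.
  by case/andP.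
- by move=> j; rewrite raise_lower oppr0; have := hq j; lra.
Qed.

Lemma Ccone_shift Rr L t a (j0 : 'I_n) : 0 <= Rr -> 0 <= L ->
  m%:R * L = (n%:R - 1) * Rr -> a 0 (rshift m j0) < - Rr -> Ccone 0 t a ->
  Ccone Rr (t + m%:R * L) (shift_cone a L Rr j0).
Proof.
move=> Rr0 L0 hL hj0 [sa sq ha hq]; split.
- rewrite (eq_bigr (fun i => a 0 (lshift n i) + L)); last first.
    by move=> i _; rewrite row_mxEl mxE.
  by rewrite big_split /= sa sumr_const card_ord mulr_natl.
- rewrite (eq_bigr (fun j => a 0 (rshift m j) + - Rr + (if j == j0 then Rr else 0)));
    last by move=> j _; rewrite row_mxEr mxE.
  rewrite !big_split /= sq sumr_const card_ord -big_mkcond big_pred1_eq hL -mulr_natl.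
  ring.
- by move=> i; rewrite row_mxEl mxE; have := ha i; lra.
- move=> j; rewrite row_mxEr mxE; case: eqP => [->|_]; first lra.
  by have := hq j; lra.
Qed.

Lemma shift_cone_le a L Rr (j0 : 'I_n) k : 0 <= Rr -> 0 <= L ->
  shift_cone a L Rr j0 0 k <= a 0 k + L.
Proof.
move=> Rr0 L0; rewrite -(fintype.splitK k); case: (fintype.split k) => [i|j] /=.
  by rewrite row_mxEl mxE.
by rewrite row_mxEr mxE; case: eqP => _; lra.
Qed.

End Cones.

Section Transference.
Variables (R : realType) (m n : nat) (Y : 'M[R]_(m, n)).
Hypothesis hm : (0 < m)%N.

Let mn_gt0 : (0 < m + n)%N. Proof. by rewrite addn_gt0 hm. Qed.

Lemma transfer_to_C0 Rr t (a : 'rV[R]_(m + n)) : 0 <= Rr -> 0 < t -> Ccone Rr t a ->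
  delta (expdiag a *m xYmat Y) < expR (- Rr) ->
  exists a', Ccone 0 t a' /\ delta (expdiag a' *m xYmat Y) < expR (- (Rr / m%:R)).
Proof.
move=> Rr0 t0 ha hd; have [sa _ hup _] := ha.
have m0 : (0 : R) < m%:R by rewrite ltr0n.
have [v v0 hv] := (delta_ltP Y a mn_gt0 (expR_gt0 _)).1 hd.
have hB i : expR (- Rr) <= expR (a 0 (lshift n i)) by rewrite ler_expR ltW.
have [j0 [vj0 _]] := short_lower_coord hB v0 hv.
have [s0 [s0pos s0lt hs0]] := short_max_weight hv vj0.
have ls0 : ln s0 < - Rr by rewrite -ltr_expR lnK ?posrE.
have bm : (#|nonpos_upper a| < m)%N by rewrite card_nonpos_upper_lt // sa.
set b := #|nonpos_upper a| in bm *.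
set mu := Num.min (- Rr - ln s0) t.
have mu0 : 0 < mu by rewrite lt_min t0 andbT subr_gt0.
have mugap : mu <= - Rr - ln s0 by rewrite ge_min lexx.
set eta := mu / m%:R.
have eta0 : 0 < eta by rewrite divr_gt0.
have bR : b%:R + 1 <= (m%:R : R) by rewrite natr1 ler_nat.
have hbeta : b%:R * eta < mu.
  have hm_eta : m%:R * eta = mu by rewrite /eta mulrC divfK ?gt_eqF.
  have : b%:R * eta <= (m%:R - 1) * eta by apply: ler_wpM2r; [exact: ltW | lra].
  by rewrite mulrBl mul1r; lra.
have hbRr : b%:R * (Rr / m%:R) + Rr / m%:R <= Rr.
  have : (b%:R + 1) * (Rr / m%:R) <= m%:R * (Rr / m%:R).
    by apply: ler_wpM2r => //; rewrite divr_ge0 // ltW.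
  by rewrite mulrDl mul1r [m%:R * _]mulrC divfK ?gt_eqF.
have hbt : b%:R * eta < \sum_i a 0 (lshift n i).
  by rewrite sa; apply: lt_le_trans hbeta _; rewrite ge_min lexx orbT.
have hup' i := raise_upper i (ltW eta0) hbt.
exists (raise a eta); split; first by apply: Ccone_raise ha => //; rewrite -sa.
apply/(delta_ltP Y _ mn_gt0 (expR_gt0 _)).
apply: (short_dirichlet (P := nonpos_upper a) (eta := eta) s0pos (expR_gt0 _) hs0 vj0).
- by move=> i hi; have := hup' i; rewrite hi.
- by move=> i /negbTE hi; have := hup' i; rewrite hi => /andP[].
- by move=> j; rewrite raise_lower.
- have : 0 <= Rr / m%:R by rewrite divr_ge0 // ltW.
  by rewrite -expRD expR_le1; lra.
have s0E : s0 = expR (ln s0) by rewrite lnK ?posrE.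
rewrite s0E -expRB -expRD -expRM_natl -expRD expR_gt1.
by rewrite mulrDr !mulrN; lra.
Qed.

Lemma transfer_to_C Rr L t (a : 'rV[R]_(m + n)) : 0 <= Rr -> 0 <= L ->
  m%:R * L = (n%:R - 1) * Rr -> Ccone 0 t a ->
  delta (expdiag a *m xYmat Y) < expR (- (Rr + L)) ->
  exists a', Ccone Rr (t + m%:R * L) a' /\ delta (expdiag a' *m xYmat Y) < expR (- Rr).
Proof.
move=> Rr0 L0 hL ha hd; have [_ _ hup _] := ha.
have [v v0 hv] := (delta_ltP Y a mn_gt0 (expR_gt0 _)).1 hd.
have hB i : expR (- (Rr + L)) <= expR (a 0 (lshift n i)).
  by rewrite ler_expR; have := hup i; lra.
have [j0 [_ hj0]] := short_lower_coord hB v0 hv.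
exists (shift_cone a L Rr j0); split.
  apply: Ccone_shift ha => //; move: hj0; rewrite ltr_expR; lra.
apply/(delta_ltP Y _ mn_gt0 (expR_gt0 _)); exists v => //.
rewrite (_ : expR (- Rr) = expR (- (Rr + L)) * expR L); last first.
  by rewrite -expRD; congr expR; ring.
by apply: short_shift hv _ => k; apply: shift_cone_le.
Qed.

End Transference.

Theorem mainTheorem11 (R : realType) (m n : nat) (hm : (0 < m)%N) (hn : (0 < n)%N)
  (Y : 'M[R]_(m, n)) (c t : R) (hc0 : 0 < c) (hc1 : c < 1) (ht : 0 < t) :
  let Rc := (m + n)%:R^-1 * ln c^-1 in
  ((exists a, Ccone Rc t a /\ delta (expdiag a *m xYmat Y) < c `^ ((m + n)%:R^-1)) ->
     exists a', Ccone 0 t a' /\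
       delta (expdiag a' *m xYmat Y) < c `^ ((m * (m + n))%:R^-1))
  /\
  ((exists a, Ccone 0 t a /\
       delta (expdiag a *m xYmat Y) < c `^ ((m + n - 1)%:R / (m * (m + n))%:R)) ->
     exists a', Ccone Rc (t - (n%:R - 1) / (m + n)%:R * ln c) a' /\
       delta (expdiag a' *m xYmat Y) < c `^ ((m + n)%:R^-1)).
Proof.
move=> Rc.
have lc0 : ln c < 0 by apply: ln_lt0; rewrite hc0 hc1.
have mn0 : (0 : R) < (m + n)%:R by rewrite ltr0n addn_gt0 hm.
have m0 : (0 : R) < m%:R by rewrite ltr0n.
have RcE : Rc = - ln c / (m + n)%:R by rewrite /Rc lnV ?posrE // mulrC.
have Rc0 : 0 <= Rc by rewrite RcE divr_ge0 ?ltW // oppr_gt0.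
have powE x : c `^ x = expR (x * ln c) by rewrite /powR gt_eqF.
have E1 : c `^ ((m + n)%:R^-1) = expR (- Rc) by rewrite powE RcE mulNr opprK mulrC.
split=> -[a [ha hd]].
  rewrite E1 in hd; have [a' [ha' hd']] := transfer_to_C0 hm Rc0 ht ha hd.
  exists a'; split => //; rewrite (_ : c `^ _ = expR (- (Rc / m%:R))) //.
  by rewrite powE natrM RcE; congr expR; field; rewrite -natrD !gt_eqF.
set L := (n%:R - 1) / m%:R * Rc.
have L0 : 0 <= L by rewrite mulr_ge0 // divr_ge0 ?subr_ge0 ?ler1n ?ltW.
have hL : m%:R * L = (n%:R - 1) * Rc by rewrite /L; field; rewrite gt_eqF.
rewrite (_ : c `^ _ = expR (- (Rc + L))) in hd; last first.
  rewrite powE /L RcE natrB ?addn_gt0 ?hm // natrM natrD; congr expR.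
  by field; rewrite -natrD !gt_eqF.
have [a' [ha' hd']] := transfer_to_C hm Rc0 L0 hL ha hd.
exists a'; rewrite E1; split => //.
by rewrite (_ : t - _ = t + m%:R * L) // /L RcE; field; rewrite -natrD !gt_eqF.
Qed.
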